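(* Let $n\ge 5$ and let $\mathcal{H}$ be a Berge-$K_4$-saturated $3$-graph on $n$ vertices. (i) If $u,v\in V(\mathcal{H})$ are distinct and $(u,v)$ is good, then for every witness (distinct vertices $x,y\notin\{u,v\}$ and distinct hyperedges $e_{ux},e_{uy},e_{vx},e_{vy},e_{xy}$ containing the respective pairs) every hyperedge of $\mathcal{H}$ containing both $u$ and $v$ is among $e_{ux},e_{uy},e_{vx},e_{vy},e_{xy}$. Moreover, $d_{\mathcal{H}}(u,v)\le 2$ and $d_{\mathcal{H}}(w)\ge 3$ for every $w\in N_{\mathcal{H}}(u,v)$. (ii) Let $v_1v_2v_3\in E(\mathcal{H})$ with $d_{\mathcal{H}}(v_1)\le d_{\mathcal{H}}(v_2)\le d_{\mathcal{H}}(v_3)$. If $d_{\mathcal{H}}(v_1)\le 2$, then $(v_2,v_3)$ is bad. If $d_{\mathcal{H}}(v_1)\le d_{\mathcal{H}}(v_2)\le 2$, then $(v_1,v_2)$, $(v_1,v_3)$ and $(v_2,v_3)$ are bad. If $d_{\mathcal{H}}(v_1)\le d_{\mathcal{H}}(v_2)\le d_{\mathcal{H}}(v_3)\le 2$, then $(v_1,u)$, $(v_2,u)$ and $(v_3,u)$ are bad for every $u\in V(\mathcal{H})\setminus\{v_1,v_2,v_3\}$.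
   Context: A $3$-graph has all hyperedges of size $3$. A $3$-graph contains a Berge-$K_4$ if there are $4$ distinct vertices and $6$ distinct hyperedges, one containing each of the $6$ pairs of these vertices. $\mathcal{H}$ is Berge-$K_4$-saturated if it contains no Berge-$K_4$ but adding any $3$-set not already a hyperedge creates a Berge-$K_4$. For distinct vertices $u,v$, the pair $(u,v)$ is good if adding the new edge $\{u,v\}$ creates a Berge-$K_4$, i.e. there exist distinct vertices $x,y\notin\{u,v\}$ and five distinct hyperedges $e_{ux},e_{uy},e_{vx},e_{vy},e_{xy}$ of $\mathcal{H}$ with $e_{ab}\supseteq\{a,b\}$; otherwise $(u,v)$ is bad. $d_{\mathcal{H}}(w)$ is the number of hyperedges containing $w$; $N_{\mathcal{H}}(u,v)=\{w: uvw\in E(\mathcal{H})\}$ and $d_{\mathcal{H}}(u,v)=|N_{\mathcal{H}}(u,v)|$. *)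

From mathcomp Require Import all_boot.

Set Implicit Arguments. Unset Strict Implicit. Unset Printing Implicit Defensive.

Section Berge.
Variable T : finType.

Definition uniform3 (E : {set {set T}}) : Prop :=
  forall e, e \in E -> #|e| = 3.

Definition has_berge_K4 (E : {set {set T}}) : Prop :=
  exists (a b c d : T) (eab eac ead ebc ebd ecd : {set T}),
    [/\ uniq [:: a; b; c; d],
        [/\ eab \in E, eac \in E, ead \in E, ebc \in E & [/\ ebd \in E & ecd \in E]],
        uniq [:: eab; eac; ead; ebc; ebd; ecd] &
        [/\ [/\ a \in eab & b \in eab], [/\ a \in eac & c \in eac],
            [/\ a \in ead & d \in ead], [/\ b \in ebc & c \in ebc] &
            [/\ [/\ b \in ebd & d \in ebd] & [/\ c \in ecd & d \in ecd]]]].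

Definition berge_K4_saturated (E : {set {set T}}) : Prop :=
  ~ has_berge_K4 E /\
  forall S : {set T}, #|S| = 3 -> S \notin E -> has_berge_K4 (S |: E).

Definition good_witness (E : {set {set T}}) (u v x y : T)
    (eux euy evx evy exy : {set T}) : Prop :=
  [/\ uniq [:: u; v; x; y],
      [/\ eux \in E, euy \in E, evx \in E, evy \in E & exy \in E],
      uniq [:: eux; euy; evx; evy; exy] &
      [/\ [/\ u \in eux & x \in eux], [/\ u \in euy & y \in euy],
          [/\ v \in evx & x \in evx], [/\ v \in evy & y \in evy] &
          [/\ x \in exy & y \in exy]]].

Definition good (E : {set {set T}}) (u v : T) : Prop :=
  exists x y eux euy evx evy exy, good_witness E u v x y eux euy evx evy exy.

Definition bad (E : {set {set T}}) (u v : T) : Prop := ~ good E u v.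

Definition deg (E : {set {set T}}) (w : T) : nat := #|[set e in E | w \in e]|.

Definition coN (E : {set {set T}}) (u v : T) : {set T} :=
  [set w | [set u; v; w] \in E].

Definition codeg (E : {set {set T}}) (u v : T) : nat := #|coN E u v|.

End Berge.

(** A witness for a good pair (u, v) consists of five distinct edges: x lies in
    three of them and so does y, hence both have degree at least 3, and any
    edge through u other than e_ux, e_uy gives u degree at least 3. An edge
    through u and v outside the witness would complete a Berge-K4, so every such
    edge is a witness edge and its third vertex is x or y. Part (ii) is the
    contrapositive: low degrees on an edge v1v2v3 leave no room for a witness. *)
From mathcomp Require Import all_boot.

Set Implicit Arguments.
Unset Strict Implicit.
Unset Printing Implicit Defensive.

Section SaturatedFacts.
Variable T : finType.
Implicit Types (E : {set {set T}}) (e f : {set T}).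

Lemma in_set3_third (a b c z : T) :
  a != z -> b != z -> z \in [set a; b; c] -> z = c.
Proof.
rewrite !inE -orbA => az bz /or3P[/eqP zE|/eqP zE|/eqP //].
- by rewrite zE eqxx in az.
- by rewrite zE eqxx in bz.
Qed.

Lemma set3_rotl (a b c : T) : [set b; c; a] = [set a; b; c].
Proof. by rewrite setUAC [[set b] :|: _]setUC. Qed.

Lemma set3_swap23 (a b c : T) : [set a; c; b] = [set a; b; c].
Proof. exact: setUAC. Qed.

Lemma uniq_edges_le_deg E (a : T) (s : seq {set T}) :
  uniq s -> {subset s <= E} -> (forall e, e \in s -> a \in e) ->
  size s <= deg E a.
Proof.
move=> s_uniq sE s_a; rewrite /deg -(card_uniqP s_uniq).
by apply/subset_leq_card/subsetP => e es; rewrite inE sE ?s_a.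
Qed.

Section Witness.
Variables (E : {set {set T}}) (u v x y : T) (eux euy evx evy exy : {set T}).
Hypothesis W : good_witness E u v x y eux euy evx evy exy.

Local Notation witness_edges := [:: eux; euy; evx; evy; exy].

Lemma witness_edges_uniq : uniq witness_edges.
Proof. by case: W. Qed.

Lemma witness_edges_sub : {subset witness_edges <= E}.
Proof. by case: W => _ [? ? ? ? ?] _ _; apply/allP; rewrite /= !andbT; apply/and5P. Qed.

Lemma witness_deg_x : 3 <= deg E x.
Proof.
case: W => _ _ _ [[_ x_ux] _ [_ x_vx] _ [x_xy _]].
apply: (uniq_edges_le_deg (s := mask [:: true; false; true; false; true] witness_edges)).
- exact: (mask_uniq witness_edges_uniq).
- by move=> e /mem_mask/witness_edges_sub.
- by apply/allP; rewrite /= x_ux x_vx x_xy.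
Qed.

Lemma witness_deg_y : 3 <= deg E y.
Proof.
case: W => _ _ _ [_ [_ y_uy] _ [_ y_vy] [_ y_xy]].
apply: (uniq_edges_le_deg (s := mask [:: false; true; false; true; true] witness_edges)).
- exact: (mask_uniq witness_edges_uniq).
- by move=> e /mem_mask/witness_edges_sub.
- by apply/allP; rewrite /= y_uy y_vy y_xy.
Qed.

Lemma witness_deg_u e : e \in E -> u \in e -> e \notin [:: eux; euy] -> 3 <= deg E u.
Proof.
move=> eE ue e_new.
apply: (uniq_edges_le_deg (s := e :: mask [:: true; true] witness_edges)).
- by rewrite cons_uniq e_new (mask_uniq witness_edges_uniq [:: true; true]).
- by move=> f; rewrite in_cons => /orP[/eqP-> // | /mem_mask/witness_edges_sub].
- by case: W => _ _ _ [[u_ux _] [u_uy _] _ _ _]; apply/allP; rewrite /= ue u_ux u_uy.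
Qed.

Lemma witness_deg_v e : e \in E -> v \in e -> e \notin [:: evx; evy] -> 3 <= deg E v.
Proof.
move=> eE ve e_new.
apply: (uniq_edges_le_deg (s := e :: mask [:: false; false; true; true] witness_edges)).
- by rewrite cons_uniq e_new (mask_uniq witness_edges_uniq [:: false; false; true; true]).
- by move=> f; rewrite in_cons => /orP[/eqP-> // | /mem_mask/witness_edges_sub].
- by case: W => _ _ _ [_ _ [v_vx _] [v_vy _] _]; apply/allP; rewrite /= ve v_vx v_vy.
Qed.

Lemma witness_edge_deg e :
  e \in E -> u \in e -> v \in e -> 3 <= deg E u \/ 3 <= deg E v.
Proof.
move=> eE ue ve; have [e_u|e_nu] := boolP (e \in [:: eux; euy]); last first.
  by left; exact: (witness_deg_u eE).
right; apply: (witness_deg_v eE) => //.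
have : uniq ([:: eux; euy] ++ [:: evx; evy]).
  exact: (mask_uniq witness_edges_uniq [:: true; true; true; true]).
by rewrite cat_uniq => /and3P[_ /hasPn disj _]; apply: contraL e_u => /disj.
Qed.

Lemma witness_edge_meets_xy f : f \in witness_edges -> (x \in f) || (y \in f).
Proof.
case: W => _ _ _ [[_ x_ux] [_ y_uy] [_ x_vx] [_ y_vy] [x_xy _]].
rewrite !inE => /orP[|/orP[|/orP[|/orP[]]]] /eqP->;
  by rewrite ?x_ux ?y_uy ?x_vx ?y_vy ?x_xy ?orbT.
Qed.

Lemma witness_low_deg_edge f :
  f \in E -> u \in f -> deg E u <= 2 -> exists2 z, z \in f & 3 <= deg E z.
Proof.
move=> fE uf u_low; have : f \in [:: eux; euy].
  by apply: contraTT u_low => /(witness_deg_u fE uf); rewrite -ltnNge.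
case: W => _ _ _ [[_ x_ux] [_ y_uy] _ _ _].
rewrite !inE => /orP[] /eqP->; [exists x | exists y] => //.
- exact: witness_deg_x.
- exact: witness_deg_y.
Qed.

Hypothesis noK4 : ~ has_berge_K4 E.

Lemma witness_uv_edge_in e :
  e \in E -> u \in e -> v \in e -> e \in witness_edges.
Proof.
move=> eE ue ve; apply/negPn/negP => e_new; apply: noK4.
case: W => ? [? ? ? ? ?] ? [[? ?] [? ?] [? ?] [? ?] [? ?]].
exists u, v, x, y, e, eux, euy, evx, evy, exy; split => //.
by rewrite cons_uniq e_new.
Qed.

Lemma coN_sub_witness : coN E u v \subset [set x; y].
Proof.
case: W => + _ _ _; rewrite /= !inE !negb_or.
case/and4P => /and3P[_ ux uy] /andP[vx vy] _ _.
apply/subsetP => w; rewrite inE => uvw_E.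
have : [set u; v; w] \in witness_edges.
  by apply: witness_uv_edge_in; rewrite // !inE eqxx ?orbT.
by move=> /witness_edge_meets_xy /orP[/(in_set3_third ux vx)|/(in_set3_third uy vy)] <-;
  rewrite !inE eqxx ?orbT.
Qed.

End Witness.

Lemma good_coN_deg E (u v w : T) :
  ~ has_berge_K4 E -> good E u v -> w \in coN E u v -> 3 <= deg E w.
Proof.
move=> noK4 [x [y [eux [euy [evx [evy [exy W]]]]]]].
move/(subsetP (coN_sub_witness W noK4)); rewrite !inE => /orP[] /eqP->.
- exact: witness_deg_x W.
- exact: witness_deg_y W.
Qed.

Lemma good_codeg_le2 E (u v : T) :
  ~ has_berge_K4 E -> good E u v -> codeg E u v <= 2.
Proof.
move=> noK4 [x [y [eux [euy [evx [evy [exy W]]]]]]].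
apply: leq_trans (subset_leq_card (coN_sub_witness W noK4)) _.
by rewrite cards2; case: (x != y).
Qed.

Lemma good_edge_deg E (u v : T) e :
  good E u v -> e \in E -> u \in e -> v \in e -> 3 <= deg E u \/ 3 <= deg E v.
Proof.
move=> [x [y [eux [euy [evx [evy [exy W]]]]]]] eE ue ve.
exact: (witness_edge_deg W eE ue ve).
Qed.

Lemma good_low_deg_edge E (u v : T) f :
  good E u v -> f \in E -> u \in f -> deg E u <= 2 ->
  exists2 z, z \in f & 3 <= deg E z.
Proof.
move=> [x [y [eux [euy [evx [evy [exy W]]]]]]] fE uf.
exact: (witness_low_deg_edge W fE uf).
Qed.

End SaturatedFacts.

Theorem fact3p1 (n : nat) (T : finType) (E : {set {set T}}) :
  5 <= n -> #|T| = n -> uniform3 E -> berge_K4_saturated E ->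
  (* (i) *)
  (forall u v : T, u != v -> good E u v ->
     (forall x y eux euy evx evy exy,
        good_witness E u v x y eux euy evx evy exy ->
        forall e, e \in E -> u \in e -> v \in e ->
          e \in [:: eux; euy; evx; evy; exy]) /\
     codeg E u v <= 2 /\
     (forall w, w \in coN E u v -> 3 <= deg E w)) /\
  (* (ii) *)
  (forall v1 v2 v3 : T, [set v1; v2; v3] \in E ->
     deg E v1 <= deg E v2 -> deg E v2 <= deg E v3 ->
     (deg E v1 <= 2 -> bad E v2 v3) /\
     (deg E v2 <= 2 -> [/\ bad E v1 v2, bad E v1 v3 & bad E v2 v3]) /\
     (deg E v3 <= 2 ->
        forall u : T, u \notin [set v1; v2; v3] ->
          [/\ bad E v1 u, bad E v2 u & bad E v3 u])).
Proof.
move=> _ _ _ [noK4 _]; split.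
  move=> u v _ uv_good; split.
    by move=> x y eux euy evx evy exy W; apply: witness_uv_edge_in W noK4.
  by split=> [|w]; [exact: good_codeg_le2 | exact: good_coN_deg].
move=> v1 v2 v3 E123 d12 d23.
have bad_of_low_coN w a b : w \in coN E a b -> deg E w <= 2 -> bad E a b.
  by move=> w_ab w_low /(good_coN_deg noK4)/(_ w_ab); rewrite ltnNge w_low.
have v1_23 : v1 \in coN E v2 v3 by rewrite inE set3_rotl.
have v2_13 : v2 \in coN E v1 v3 by rewrite inE set3_swap23.
split; first exact: bad_of_low_coN v1_23.
split=> [d2 | d3 u _].
  have d1 := leq_trans d12 d2; split; last exact: bad_of_low_coN v1_23 d1.
  - move=> /good_edge_deg/(_ E123); rewrite !inE !eqxx ?orbT => /(_ isT isT).
    by rewrite !ltnNge d1 d2 => -[].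
  - exact: bad_of_low_coN v2_13 d2.
have d2 := leq_trans d23 d3; have d1 := leq_trans d12 d2.
have low z : z \in [set v1; v2; v3] -> deg E z <= 2.
  by rewrite !inE -orbA => /or3P[] /eqP->.
have bad_u z : z \in [set v1; v2; v3] -> bad E z u.
  move=> z_in /good_low_deg_edge/(_ E123 z_in (low z z_in))[w /low].
  by rewrite leqNgt => /negP.
by split; apply: bad_u; rewrite !inE eqxx ?orbT.
Qed.
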